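(* Let $G$ be a finite group, let $n,m$ be positive integers with $m\mid n$, let $l\in\mathbb{Z}$ and let $\varepsilon=(\varepsilon_d)_{d\mid n}\in \mathrm{VPA}_n(G)$. Let $\chi$ be either an ordinary character of $G$ or a Brauer character of $G$ modulo a prime not dividing $n$. Then $$\mu(\zeta_m^l,\varepsilon^{n/m},\chi)=\sum_{\xi\in\mathbb{C},\ \xi^{n/m}=\zeta_m^l}\mu(\xi,\varepsilon,\chi).$$
   Context: For a positive integer $k$, $\zeta_k$ denotes a complex primitive $k$-th root of unity, chosen so that $\zeta_n^{n/m}=\zeta_m$; $\mathrm{Tr}_{F/K}$ denotes the trace of a number field extension. $\sum_{x^G}$ denotes a sum over representatives of the conjugacy classes of $G$. Brauer characters modulo a prime $p$ are taken with respect to a sufficiently large $p$-modular system. A distribution of virtual partial augmentations of order $n$ for $G$ is a list $\varepsilon=(\varepsilon_d)_{d\mid n}$ of integer-valued class functions of $G$ such that: (V1) $\sum_{x^G}\varepsilon_d(x)=1$ for each $d$; (V2) $\varepsilon_d(1)=0$ if $d\ne n$; (V3) $\varepsilon_d(x)=0$ if $|x|$ does not divide $n/d$; (V4) for every ordinary character $\chi$ of $G$ or Brauer character $\chi$ of $G$ modulo a prime not dividing $n$, and every $n$-th root of unity $\xi$, the number $\mu(\xi,\varepsilon,\chi)=\frac{1}{n}\sum_{x^G}\sum_{d\mid n}\varepsilon_d(x)\mathrm{Tr}_{\mathbb{Q}(\zeta_n^d)/\mathbb{Q}}(\chi(x)\xi^{-d})$ is a non-negative integer. $\mathrm{VPA}_n(G)$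 is the set of these lists; the same formula defines $\mu(\xi,\varepsilon,\chi)$ for any such list. For $m\mid n$, $\varepsilon^{n/m}=((\varepsilon^{n/m})_d)_{d\mid m}$ is defined by $(\varepsilon^{n/m})_d(g)=\varepsilon_{dn/m}(g)$, and $\mu(\zeta_m^l,\varepsilon^{n/m},\chi)=\frac1m\sum_{x^G}\sum_{d\mid m}(\varepsilon^{n/m})_d(x)\mathrm{Tr}_{\mathbb{Q}(\zeta_m^d)/\mathbb{Q}}(\chi(x)\zeta_m^{-ld})$. *)

From HB Require Import structures.
From mathcomp Require Import all_boot all_order all_algebra all_fingroup all_solvable all_field all_character.
Set Implicit Arguments. Unset Strict Implicit. Unset Printing Implicit Defensive.
Import Order.TTheory GRing.Theory Num.Theory.
Local Open Scope ring_scope.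

(* Chosen automorphism sigma_j of algC with sigma_j(z) = z^j for every k-th
   root of unity z (j coprime to k); its restriction to Q(zeta_k) is the
   Galois automorphism zeta_k |-> zeta_k^j. *)
Definition Qn_aut (k j : nat) : algC -> algC :=
  match @idP (coprime j k) with
  | ReflectT h => fun a => sval (Qn_aut_exists h) a
  | ReflectF _ => id
  end.

(* Tr_{Q(zeta_k)/Q}(a) = sum over Gal(Q(zeta_k)/Q) ~ (Z/k)^* of sigma_j(a),
   meaningful (independent of choices) for a in Q(zeta_k). *)
Definition cycTr (k : nat) (a : algC) : algC :=
  \sum_(j < k | coprime j k) Qn_aut k j a.

Section Defs.
Variables (gT : finGroupType) (G : {group gT}).

(* mu(xi, eps, chi) for a list eps = (eps_d)_{d | n} (eps d for d %| n);
   Q(zeta_n^d) = Q(zeta_{n/d}) since zeta_n^d is a primitive (n/d)-th root. *)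
Definition mu (n : nat) (xi : algC) (eps : nat -> 'CF(G)) (chi : 'CF(G)) : algC :=
  n%:R^-1 * \sum_(xG in classes G) \sum_(d <- divisors n)
     eps d (repr xG) * cycTr (n %/ d) (chi (repr xG) * xi ^- d).

Definition eps_pow (eps : nat -> 'CF(G)) (q : nat) : nat -> 'CF(G) :=
  fun d => eps (d * q)%N.

(* Brauer characters of G modulo p w.r.t. a sufficiently large p-modular
   system: F a field of characteristic p containing a primitive e-th root of
   unity w, where e is the p'-part of |G|; the lifting of p'-roots of unity
   sends w^i to z^i for a primitive e-th root of unity z in algC.  The value at
   a p-regular g is the sum of the lifted eigenvalues (with multiplicity) of
   rG g.  Values at p-singular elements are unconstrained. *)
Definition is_brauer (p : nat) (chi : 'CF(G)) : Prop :=
  exists (F : fieldType) (w : F) (z : algC) (dim : nat)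
         (rG : mx_representation F G dim),
    [/\ p \in [pchar F],
        (#|G|`_(p^')).-primitive_root w,
        (#|G|`_(p^')).-primitive_root z &
        forall g, g \in G -> (p^'.-elt g)%g ->
          chi g = \sum_(i < #|G|`_(p^'))
                    (mup (w ^+ i) (char_poly (rG g)))%:R * z ^+ i].

Definition admissible_char (n : nat) (chi : 'CF(G)) : Prop :=
  chi \is a character \/
  exists p, [/\ prime p, ~~ (p %| n)%N & is_brauer p chi].

Definition is_vpa (n : nat) (eps : nat -> 'CF(G)) : Prop :=
  [/\ (forall d, (d %| n)%N -> forall x, x \in G -> eps d x \in Num.int),
      (forall d, (d %| n)%N -> \sum_(xG in classes G) eps d (repr xG) = 1),
      (forall d, (d %| n)%N -> d != n -> eps d 1%g = 0),
      (forall d x, (d %| n)%N -> x \in G -> ~~ (#[x]%g %| n %/ d)%N -> eps d x = 0) &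
      (forall chi, admissible_char n chi ->
         forall xi : algC, xi ^+ n = 1 -> mu n xi eps chi \in Num.nat)].

End Defs.

From HB Require Import structures.
From mathcomp Require Import all_boot all_order all_algebra all_fingroup all_solvable all_field all_character zify.
Import Order.TTheory GRing.Theory Num.Theory.
Set Implicit Arguments. Unset Strict Implicit. Unset Printing Implicit Defensive.
Local Open Scope ring_scope.

(* Write n = q m and zeta_m^l = zeta_m^r with 0 <= r < m; then (zeta_n^j)^q = zeta_m^l
   exactly when j = r (mod m).  Since the traces are additive, summing mu(zeta_n^j, eps, chi)
   over this residue class replaces zeta_n^(-jd) by the character sum
   sum_{j = r mod m} zeta_n^(-jd), which is q zeta_n^(-rd) if q divides d and 0 otherwise.
   So only the divisors d = d' q of n survive, they contribute q times the summands of
   mu(zeta_m^r, eps^q, chi), and q cancels against 1/n = 1/(q m). *)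

Lemma Qn_aut_is_zmod_morphism k j : zmod_morphism (Qn_aut k j).
Proof. by rewrite /Qn_aut; destruct (@idP (coprime j k)) => a b //=; rewrite rmorphB. Qed.

HB.instance Definition _ (k j : nat) :=
  GRing.isZmodMorphism.Build algC algC (Qn_aut k j) (Qn_aut_is_zmod_morphism k j).

Lemma cycTr_is_zmod_morphism k : zmod_morphism (cycTr k).
Proof. by move=> a b; rewrite /cycTr -sumrB; apply: eq_bigr => j _; rewrite raddfB. Qed.

HB.instance Definition _ (k : nat) :=
  GRing.isZmodMorphism.Build algC algC (cycTr k) (cycTr_is_zmod_morphism k).

Lemma sum_residue_class (R : nmodType) (q m r : nat) (f : nat -> R) : (r < m)%N ->
  \sum_(j < q * m | (j %% m == r)%N) f j = \sum_(k < q) f (k * m + r)%N.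
Proof.
move=> ltrm; rewrite big_mkcond -(big_mkord xpredT (fun j => if (j %% m == r)%N then f j else 0)).
rewrite big_nat_mul big_mkord.
apply: eq_bigr => k _; rewrite mulSn addnC -{1}(add0n (k * m)%N) big_addn addKn.
rewrite big_mkord (eq_bigr (fun j : 'I_m => if j == Ordinal ltrm then f (j + k * m)%N else 0)).
  by rewrite -big_mkcond (big_pred1 (Ordinal ltrm)) //= addnC.
by move=> j _; rewrite addnC modnMDl modn_small.
Qed.

Lemma sum_unity_root_expr_eq0 (R : idomainType) (y : R) q :
  y ^+ q = 1 -> y != 1 -> \sum_(k < q) y ^+ k = 0.
Proof.
move=> yq y1; have /esym/eqP := subrX1 y q.
by rewrite yq subrr mulf_eq0 subr_eq0 (negPf y1) => /eqP.
Qed.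

Lemma sum_divisors_multiples (R : nmodType) (q m : nat) (g : nat -> R) :
  (0 < q)%N -> (0 < m)%N -> (forall d, ~~ (q %| d)%N -> g d = 0) ->
  \sum_(d <- divisors (m * q)) g d = \sum_(d <- divisors m) g (d * q)%N.
Proof.
move=> q_gt0 m_gt0 g_supp.
rewrite (bigID (fun d => q %| d)%N) /= [X in _ + X]big1 ?addr0; last by move=> d /g_supp.
rewrite -big_filter -(big_map (fun d => d * q)%N xpredT g).
apply/perm_big/uniq_perm.
- by rewrite filter_uniq ?divisors_uniq.
- by rewrite map_inj_uniq ?divisors_uniq // => a b /eqP; rewrite eqn_pmul2r // => /eqP.
move=> x; rewrite mem_filter -dvdn_divisors ?muln_gt0 ?q_gt0 ?m_gt0 //.
apply/andP/mapP => [[/dvdnP[d ->] dvd_dq_mq] | [d d_dvd_m ->]].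
  by exists d; rewrite // -dvdn_divisors // -(dvdn_pmul2r q_gt0).
by rewrite dvdn_mull // dvdn_pmul2r // dvdn_divisors.
Qed.

Section ResidueClassSums.

Variables (q m : nat) (zn : algC).
Hypotheses (q_gt0 : (0 < q)%N) (m_gt0 : (0 < m)%N).
Hypothesis zn_prim : (q * m)%N.-primitive_root zn.

Lemma sum_residue_exprVn r d : (r < m)%N ->
  \sum_(j < q * m | (j %% m == r)%N) (zn ^+ j) ^- d =
  if (q %| d)%N then q%:R * (zn ^+ r) ^- d else 0.
Proof.
move=> ltrm; rewrite (sum_residue_class q (fun j => (zn ^+ j) ^- d) ltrm).
set u := zn ^+ (m * d).
have term_eq k : (zn ^+ (k * m + r)) ^- d = (zn ^+ r) ^- d * (u^-1) ^+ k.
  by rewrite /u exprVn -!exprM -invfM -exprD; congr (_ ^-1); congr (_ ^+ _); lia.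
under eq_bigr => k _ do rewrite term_eq; rewrite -mulr_sumr.
have u_eq1 : (u == 1) = (q %| d)%N.
  by rewrite /u -(prim_order_dvd zn_prim) (mulnC q) dvdn_pmul2l.
have uq : u ^+ q = 1 by rewrite /u -exprM mulnAC (mulnC m) exprM (prim_expr_order zn_prim) expr1n.
case: ifP => q_dvd_d.
  have /eqP -> : u == 1 by rewrite u_eq1.
  by rewrite invr1 (eq_bigr _ (fun _ _ => expr1n _ _)) sumr_const card_ord mulrC.
by rewrite sum_unity_root_expr_eq0 ?mulr0 // ?exprVn ?uq ?invr1 // invr_eq1 u_eq1 q_dvd_d.
Qed.

Lemma sum_residue_mu_terms (e : nat -> algC) (c : algC) r : (r < m)%N ->
  \sum_(j < q * m | (j %% m == r)%N) \sum_(d <- divisors (q * m))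
     e d * cycTr ((q * m) %/ d) (c * (zn ^+ j) ^- d) =
  q%:R * \sum_(d <- divisors m) e (d * q)%N * cycTr (m %/ d) (c * ((zn ^+ q) ^+ r) ^- d).
Proof.
move=> ltrm; rewrite exchange_big /=.
under eq_bigr => d _ do rewrite -mulr_sumr -raddf_sum -mulr_sumr sum_residue_exprVn //.
rewrite mulnC sum_divisors_multiples //; last first.
  by move=> d /negPf->; rewrite mulr0 raddf0 mulr0.
rewrite mulr_sumr; apply: eq_bigr => d _.
rewrite dvdn_mull // divnMr //.
have -> : zn ^+ r ^+ (d * q) = zn ^+ q ^+ r ^+ d by rewrite -!exprM; congr (_ ^+ _); lia.
by rewrite [c * _]mulrCA [q%:R * (c / _)]mulr_natl raddfMn mulrnAr mulr_natl.
Qed.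

End ResidueClassSums.

Theorem lemma3p2 (gT : finGroupType) (G : {group gT}) (zeta : nat -> algC)
  (zeta_prim : forall k, (0 < k)%N -> k.-primitive_root (zeta k))
  (zeta_compat : forall k j, (0 < j)%N -> (0 < k)%N -> (j %| k)%N ->
                   zeta k ^+ (k %/ j) = zeta j)
  (n m : nat) (l : int) (eps : nat -> 'CF(G)) (chi : 'CF(G)) :
  (0 < n)%N -> (0 < m)%N -> (m %| n)%N ->
  is_vpa n eps -> admissible_char n chi ->
  mu m (zeta m ^ l) (eps_pow eps (n %/ m)) chi =
  \sum_(j < n | (zeta n ^+ j) ^+ (n %/ m) == zeta m ^ l)
     mu n (zeta n ^+ j) eps chi.
Proof.
move=> n_gt0 m_gt0 /dvdnP[q n_qm] _ _; subst n.
have q_gt0 : (0 < q)%N by move: n_gt0; rewrite muln_gt0 => /andP[].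
have zm_prim := zeta_prim m m_gt0.
have zq : zeta (q * m)%N ^+ q = zeta m.
  by rewrite -(zeta_compat (q * m)%N m) ?mulnK ?dvdn_mull.
have wm : (zeta m ^ l) ^+ m = 1.
  by rewrite exprnP exprzAC -exprnP (prim_expr_order zm_prim) exp1rz.
have [r ->] := prim_rootP zm_prim wm.
rewrite mulnK // (eq_bigl (fun j : 'I_(q * m) => (j %% m == r)%N)); last first.
  move=> j; rewrite -exprM (mulnC _ q) exprM zq (eq_prim_root_expr zm_prim).
  by rewrite (modn_small (ltn_ord r)).
rewrite /mu -mulr_sumr [in RHS]exchange_big /=; symmetry.
under eq_bigr => xG _ do rewrite (sum_residue_mu_terms q_gt0 m_gt0 (zeta_prim _ n_gt0)) // zq.
rewrite -mulr_sumr mulrA natrM invfM; congr (_ * _).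
by rewrite mulrAC mulVf ?mul1r // pnatr_eq0 -lt0n.
Qed.
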